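(* Let $p\ge4$, let $\{\mu_a\}$ be a conditional design satisfying Assumption 1, and let $\theta\in\Theta$ be the true parameter with $w=\alpha+B\theta$. Let $A_1,\dots,A_n$ be i.i.d. copies of the observed subset $A$, and let $\hat\theta_n\in\Theta$ be a maximizer of the log-likelihood $l_n(\theta)=\sum_{i=1}^n\ln \mathbf{1}_{A_i}^{\top}(\alpha+B\theta)$ over $\Theta$. Then $\hat\theta_n\to\theta$ almost surely as $n\to\infty$, and consequently $\hat w_n=\alpha+B\hat\theta_n\to w$ almost surely.
   Context: A conditional design on $[p]$ is a collection $\{\mu_a\ge0: a\subseteq[p]\}$ with $\mu_a=0$ if $|a|<2$ and $\sum_{a\ni j}\mu_a=1$ for all $j\in[p]$; the observed subset $A$ is generated from $X$ with $\mathbb{P}(X=j)=w_j$ by $\mathbb{P}(A=a\mid X=j)=\mu_a\mathbb{1}\{j\in a\}$, so $\mathbb{P}(A=a)=\mu_a\mathbf{1}_a^\top w$. $\mathbf{1}_a\in\{0,1\}^p$ is the indicator vector of $a$. $\Theta=\{\theta\in\mathbb{R}^{p-1}:\theta_i\ge0,\sum_i\theta_i\le1\}$, $\alpha=(0,\dots,0,1)^\top\in\mathbb{R}^p$, $B=\begin{pmatrix}I_{p-1}\\ -\mathbf{1}^\top\end{pmatrix}\in\mathbb{R}^{p\times(p-1)}$. Assumption 1: for $u\in\mathbb{R}^{p-1}$, if $\mathbf{1}_a^\top Bu=0$ for all $a$ with $\mu_a>0$, then $u=0$. *)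

From HB Require Import structures.
From mathcomp Require Import all_boot all_order all_algebra.
From mathcomp Require Import all_classical all_reals all_analysis.
Set Implicit Arguments. Unset Strict Implicit. Unset Printing Implicit Defensive.
Import Order.TTheory GRing.Theory Num.Theory.
Import numFieldNormedType.Exports.
Local Open Scope classical_set_scope.
Local Open Scope ring_scope.

Section Defs.
Variable R : realType.

Definition conditional_design (p : nat) (mu : {set 'I_p} -> R) : Prop :=
  (forall a : {set 'I_p}, 0 <= mu a) /\
  (forall a : {set 'I_p}, (#|a| < 2)%N -> mu a = 0) /\
  (forall j : 'I_p, \sum_(a : {set 'I_p} | j \in a) mu a = 1).

Definition ind (p : nat) (a : {set 'I_p}) : 'cV[R]_p :=
  \col_(j < p) (j \in a)%:R.

Definition alpha (p : nat) : 'cV[R]_p := \col_(i < p) (nat_of_ord i == p.-1)%:R.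

Definition Bmx (p : nat) : 'M[R]_(p, p.-1) :=
  \matrix_(i < p, j < p.-1)
     (if (i < p.-1)%N then (nat_of_ord i == nat_of_ord j)%:R else -1).

Definition wvec (p : nat) (theta : 'cV[R]_p.-1) : 'cV[R]_p :=
  alpha p + Bmx p *m theta.

Definition indT (p : nat) (a : {set 'I_p}) (v : 'cV[R]_p) : R :=
  ((ind a)^T *m v) 0 0.

Definition Theta (p : nat) (theta : 'cV[R]_p.-1) : Prop :=
  (forall i, 0 <= theta i 0) /\ \sum_i theta i 0 <= 1.

Definition assumption1 (p : nat) (mu : {set 'I_p} -> R) : Prop :=
  forall u : 'cV[R]_p.-1,
    (forall a : {set 'I_p}, 0 < mu a -> ((ind a)^T *m Bmx p *m u) 0 0 = 0) -> u = 0.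

(* law of the observed subset: P(A = a) = mu_a 1_a^T w *)
Definition law_A (p : nat) (mu : {set 'I_p} -> R) (w : 'cV[R]_p)
  (a : {set 'I_p}) : R := mu a * indT a w.

(* A_1, A_2, ... are i.i.d. random subsets of [p] with law f:
   each event {A_i = a} is measurable, has probability f a, and the
   A_i are mutually independent (product rule over every finite family
   of distinct indices; enough for discrete variables). *)
Definition iid_subsets d (T : measurableType d) (P : probability T R)
  (p : nat) (A : nat -> T -> {set 'I_p}) (f : {set 'I_p} -> R) : Prop :=
  (forall i a, measurable [set om | A i om = a]) /\
  (forall i a, P [set om | A i om = a] = (f a)%:E) /\
  (forall (s : seq nat) (b : nat -> {set 'I_p}), uniq s ->
     fine (P [set om | forall i, i \in s -> A i om = b i]) =
     \prod_(i <- s) fine (P [set om | A i om = b i])).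

Definition eln (x : R) : \bar R := if 0 < x then (ln x)%:E else -oo%E.

Definition loglik (p : nat) (As : nat -> {set 'I_p}) (n : nat)
  (theta : 'cV[R]_p.-1) : \bar R :=
  (\sum_(i < n) eln (indT (As i) (wvec theta)))%E.

Definition is_mle (p : nat) (As : nat -> {set 'I_p}) (n : nat)
  (th : 'cV[R]_p.-1) : Prop :=
  Theta th /\ forall th', Theta th' -> (loglik As n th' <= loglik As n th)%E.

End Defs.

From HB Require Import structures.
From mathcomp Require Import all_boot all_order all_algebra.
From mathcomp Require Import all_classical all_reals all_analysis.
From mathcomp Require Import lra ring.
Set Implicit Arguments. Unset Strict Implicit. Unset Printing Implicit Defensive.
Import Order.TTheory GRing.Theory Num.Theory.
Import numFieldNormedType.Exports.
Local Open Scope classical_set_scope.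
Local Open Scope ring_scope.

(* Strong consistency of the maximum-likelihood estimator for a conditional
   design.  Write s_a(th) = 1_a^T w(th) and q_a = mu_a s_a(theta) = P(A = a).

   For i.i.d. variables with values in a finite set
      and a centered function x bounded by 1, the fourth moment of
      x(A_1) + ... + x(A_n) is at most 3 n^2 (TupleMoments); Markov's
      inequality and Borel-Cantelli give that the empirical counts N_n(a)
      satisfy |N_n(a) - n q_a| <= n/(k+1) eventually, almost surely.
   2. Likelihood inequality (Consistency).  A maximizer beats theta, and
      ln t <= 2 (sqrt t - 1); together with sum_a mu_a s_a(th) = 1 this bounds
      the weighted Hellinger distance of the maximizer by the deviations
      |N_n(a) - n q_a|, so it tends to 0, and s_a(theta_hat_n) -> s_a(theta)
      for every a with mu_a > 0.
   3. Identification.  By Assumption 1 the map u |-> (1_a^T B u)_{mu_a > 0} has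
      a left inverse, which recovers theta_hat_n - theta from these vanishing
      differences.  The main theorem combines the almost-sure statement of 1
      with the deterministic statements of 2 and 3 (only p >= 1 is used). *)

(* The partial sums of the series of 1/(n+1)^2 are bounded by 2, by
   comparison with the telescoping sum of 2/(n+1) - 2/(n+2). *)
Lemma sum_inv_sq (R : realType) (N : nat) :
  \sum_(n < N) ((n.+1%:R : R) ^+ 2)^-1 <= 2 - 2 * (N.+1%:R)^-1.
Proof.
elim: N => [|N IH]; first by rewrite big_ord0 invr1 mulr1 subrr.
rewrite big_ord_recr /=; apply: (le_trans (lerD IH (lexx _))).
have N1_pos : (0:R) < N.+1%:R by rewrite ltr0n.
have N2E : (N.+2%:R : R) = N.+1%:R + 1 by rewrite natr1.
have telescope : 2 * (N.+1%:R : R)^-1 - 2 * (N.+2%:R)^-1 =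
    ((N.+1%:R) * (N.+2%:R) / 2)^-1.
  by rewrite N2E; field; rewrite !gt_eqF //; lra.
have step : ((N.+1%:R : R) ^+ 2)^-1 <= 2 * (N.+1%:R)^-1 - 2 * (N.+2%:R)^-1.
  rewrite telescope expr2 lef_pV2 ?posrE ?mulr_gt0 ?divr_gt0 ?ltr0n // N2E.
  have : (1:R) <= N.+1%:R by rewrite ler1n.
  move: N1_pos; set x := N.+1%:R => ? ?; nra.
move: step; set a := (_ ^+ 2)^-1; set b := (N.+1%:R)^-1; set c := (N.+2%:R)^-1.
lra.
Qed.

Lemma nneseries_le_bound (R : realType) (u : nat -> \bar R) (C : \bar R) :
  (forall n, (0 <= u n)%E) -> (forall N, (\sum_(n < N) u n <= C)%E) ->
  (\sum_(0 <= n <oo) u n <= C)%E.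
Proof.
move=> u_ge0 u_le; apply: lime_le.
  by apply: is_cvg_nneseries => n _ _; exact: u_ge0.
by apply: nearW => N; rewrite big_mkord; exact: u_le.
Qed.

(* For a probability vector q on a finite set S
   and a function x on S, the n-tuples of S carry the product weight of q, and
   sum_moment n k is the k-th moment of the sum of the coordinates under x;
   it is the k-th moment of x(A_1) + ... + x(A_n) for i.i.d. A_i of law q. *)
Section TupleMoments.
Variables (R : realType) (S : finType) (q x : S -> R).

Lemma big_tuple_cons n (F : n.+1.-tuple S -> R) :
  \sum_(t : n.+1.-tuple S) F t =
  \sum_(s : S) \sum_(t : n.-tuple S) F [tuple of s :: t].
Proof.
rewrite pair_big /=.
rewrite (reindex (fun p : S * n.-tuple S => [tuple of p.1 :: p.2])) //=.
exists (fun t : n.+1.-tuple S => (thead t, [tuple of behead t])).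
  by move=> [s t] _ /=; rewrite theadE; congr pair; apply: val_inj.
by move=> t _ /=; rewrite -tuple_eta.
Qed.

Lemma big_tuple0 (F : 0.-tuple S -> R) : \sum_(t : 0.-tuple S) F t = F [tuple].
Proof.
by rewrite (big_pred1 [tuple]) // => t; rewrite /= [t]tuple0; apply/esym/eqP.
Qed.

Definition tuple_weight n (t : n.-tuple S) := \prod_(i < n) q (tnth t i).
Definition tuple_sum n (t : n.-tuple S) := \sum_(i < n) x (tnth t i).
Definition sum_moment n k := \sum_(t : n.-tuple S) tuple_weight t * tuple_sum t ^+ k.
Definition step_moment k := \sum_(s : S) q s * x s ^+ k.

Lemma tuple_weight_cons n s (t : n.-tuple S) :
  tuple_weight [tuple of s :: t] = q s * tuple_weight t.
Proof.
rewrite /tuple_weight big_ord_recl; congr (_ * _).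
by apply: eq_bigr => i _; rewrite tnthS.
Qed.

Lemma tuple_sum_cons n s (t : n.-tuple S) :
  tuple_sum [tuple of s :: t] = x s + tuple_sum t.
Proof.
rewrite /tuple_sum big_ord_recl; congr (_ + _).
by apply: eq_bigr => i _; rewrite tnthS.
Qed.

Lemma sum_momentS n k :
  sum_moment n.+1 k =
  \sum_(j < k.+1) 'C(k, j)%:R * step_moment (k - j) * sum_moment n j.
Proof.
rewrite /sum_moment big_tuple_cons.
transitivity (\sum_s \sum_(j < k.+1) \sum_(t : n.-tuple S)
  'C(k, j)%:R * (q s * x s ^+ (k - j)) * (tuple_weight t * tuple_sum t ^+ j)).
  apply: eq_bigr => s _; rewrite exchange_big /=; apply: eq_bigr => t _.
  rewrite tuple_weight_cons tuple_sum_cons exprDn mulr_sumr.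
  by apply: eq_bigr => j _; rewrite -mulr_natl; ring.
rewrite exchange_big /=; apply: eq_bigr => j _.
rewrite /step_moment mulr_sumr mulr_suml; apply: eq_bigr => s _.
by rewrite -mulr_sumr mulrA.
Qed.

Lemma sum_moment0 k : sum_moment 0 k = (k == 0)%:R.
Proof.
rewrite /sum_moment big_tuple0 /tuple_weight /tuple_sum !big_ord0 mul1r.
by case: k => [|k]; rewrite ?expr0 // expr0n.
Qed.

Lemma sum_momentS2 n : sum_moment n.+1 2 =
  step_moment 2 * sum_moment n 0 + 2 * step_moment 1 * sum_moment n 1 +
  step_moment 0 * sum_moment n 2.
Proof.
rewrite sum_momentS !big_ord_recr big_ord0 /= add0r.
rewrite (_ : 'C(2,0) = 1)%N // (_ : 'C(2,1) = 2)%N // (_ : 'C(2,2) = 1)%N //.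
by rewrite (_ : (2 - 0 = 2)%N) // (_ : (2 - 1 = 1)%N) // subnn; ring.
Qed.

Lemma sum_momentS4 n : sum_moment n.+1 4 =
  step_moment 4 * sum_moment n 0 + 4 * step_moment 3 * sum_moment n 1 +
  6 * step_moment 2 * sum_moment n 2 + 4 * step_moment 1 * sum_moment n 3 +
  step_moment 0 * sum_moment n 4.
Proof.
rewrite sum_momentS !big_ord_recr big_ord0 /= add0r.
rewrite (_ : 'C(4,0) = 1)%N // (_ : 'C(4,1) = 4)%N // (_ : 'C(4,2) = 6)%N //.
rewrite (_ : 'C(4,3) = 4)%N // (_ : 'C(4,4) = 1)%N //.
rewrite (_ : (4 - 0 = 4)%N) // (_ : (4 - 1 = 3)%N) // (_ : (4 - 2 = 2)%N) //.
by rewrite (_ : (4 - 3 = 1)%N) // subnn; ring.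
Qed.

Hypotheses (q_ge0 : forall s, 0 <= q s) (q_sum1 : \sum_s q s = 1)
  (x_centered : \sum_s q s * x s = 0) (x_le1 : forall s, `|x s| <= 1).

Lemma step_moment0 : step_moment 0 = 1.
Proof. by rewrite -q_sum1; apply: eq_bigr => s _; rewrite mulr1. Qed.

Lemma step_moment1 : step_moment 1 = 0.
Proof. by rewrite -x_centered; apply: eq_bigr => s _; rewrite expr1. Qed.

Lemma step_moment_even k : 0 <= step_moment k.*2 <= 1.
Proof.
apply/andP; split.
  by apply: sumr_ge0 => s _; rewrite mulr_ge0 // -muln2 exprM sqr_ge0.
rewrite -q_sum1; apply: ler_sum => s _; rewrite ler_piMr //.
by apply: le_trans (ler_norm _) _; rewrite normrX exprn_ile1.
Qed.

Lemma tuple_weight_ge0 n (t : n.-tuple S) : 0 <= tuple_weight t.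
Proof. by apply: prodr_ge0 => i _. Qed.

Lemma sum_moment_bounds n : [/\ sum_moment n 0 = 1, sum_moment n 1 = 0,
  0 <= sum_moment n 2 <= n%:R & sum_moment n 4 <= 3 * n%:R ^+ 2].
Proof.
elim: n => [|n [M0 M1 /andP[M2_ge0 M2_le] M4]].
  by rewrite !sum_moment0 /= expr0n /= mulr0 lexx.
have /andP[E2_ge0 E2_le1] := step_moment_even 1.
have /andP[E4_ge0 E4_le1] := step_moment_even 2.
have n_ge0 : (0:R) <= n%:R := ler0n R n.
split.
- by rewrite sum_momentS big_ord_recr big_ord0 /= add0r M0 step_moment0 !mul1r.
- rewrite sum_momentS !big_ord_recr big_ord0 /= add0r M0 M1 step_moment0.
  by rewrite step_moment1; ring.
- rewrite sum_momentS2 M0 M1 step_moment0 step_moment1 -natr1.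
  by apply/andP; split; lra.
- rewrite sum_momentS4 M0 M1 step_moment0 step_moment1 -natr1.
  have : step_moment 2 * sum_moment n 2 <= n%:R.
    by apply: le_trans M2_le; rewrite ler_piMl.
  nra.
Qed.

End TupleMoments.

Definition emp_count (R : realType) (S : finType) (As : nat -> S) (n : nat) (a : S) : R :=
  \sum_(i < n) (As i == a)%:R.

Section IidFinite.
Variables (R : realType) (d : measure_display) (T : measurableType d)
  (P : probability T R).

Lemma fiber_sum (S : finType) (f : T -> S) (Q : pred S) :
  (forall a, measurable [set om | f om = a]) ->
  measurable [set om | Q (f om)] /\
  P [set om | Q (f om)] = (\sum_(a | Q a) P [set om | f om = a])%E.
Proof.
move=> f_meas.
have -> : [set om | Q (f om)] =
    \bigcup_(a in [set a | Q a]) [set om | f om = a].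
  by apply/seteqP; split => om /=; [move=> ?; exists (f om) | case=> a /= ? ->].
split; first by apply: fin_bigcup_measurable => //; exact: finite_finset.
rewrite measure_fin_bigcup //; first last.
- by move=> i j _ _ [om [/= <- <-]].
- exact: finite_finset.
rewrite (fsbigE (enum Q)) ?enum_uniq //.
- rewrite -big_enum big_seq_cond [RHS]big_seq_cond; apply: eq_bigl => a.
  by case h: (a \in enum Q) => //=; rewrite mem_setE; move: h; rewrite mem_enum.
- by move=> a /=; rewrite mem_enum.
- by move=> a /= Qa; rewrite mem_enum; rewrite unfold_in Qa.
Qed.

Variables (S : finType) (A : nat -> T -> S) (q : S -> R).
Hypotheses (A_meas : forall i a, measurable [set om | A i om = a])
  (A_law : forall i a, P [set om | A i om = a] = (q a)%:E)
  (A_indep : forall (s : seq nat) (b : nat -> S), uniq s ->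
     fine (P [set om | forall i, i \in s -> A i om = b i]) =
     \prod_(i <- s) fine (P [set om | A i om = b i])).

Lemma law_ge0 a : 0 <= q a.
Proof. by rewrite -lee_fin -(A_law 0). Qed.

Lemma law_sum1 : \sum_a q a = 1.
Proof.
have [_] := fiber_sum predT (A_meas 0).
rewrite (_ : [set om | predT (A 0 om)] = setT); last by apply/seteqP; split.
rewrite probability_setT; under eq_bigr do rewrite A_law.
by rewrite sumEFin => -[].
Qed.

Definition first_obs n om : n.-tuple S := [tuple A i om | i < n].

Section Cylinders.
Variable s0 : S.

Lemma first_obsE n (t : n.-tuple S) :
  [set om | first_obs n om = t] =
  [set om | forall i, i \in iota 0 n -> A i om = nth s0 t i].
Proof.
apply/seteqP; split => om /=.
  move=> <- i; rewrite mem_iota add0n /= => lt_in.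
  rewrite -/(nat_of_ord (Ordinal lt_in)) (nth_map (Ordinal lt_in)) ?size_enum_ord //.
  by rewrite nth_ord_enum.
move=> h; apply: eq_from_tnth => i; rewrite tnth_mktuple h ?mem_iota //=.
by rewrite (tnth_nth s0).
Qed.

Lemma first_obs_meas n (t : n.-tuple S) :
  measurable [set om | first_obs n om = t].
Proof.
rewrite first_obsE.
have -> : [set om | forall i, i \in iota 0 n -> A i om = nth s0 t i] =
  \bigcap_(i in [set i | i \in iota 0 n]) [set om | A i om = nth s0 t i].
  by apply/seteqP; split => om /= h i; apply: h.
by apply: bigcap_measurableType => k _; exact: A_meas.
Qed.

Lemma first_obs_law n (t : n.-tuple S) :
  P [set om | first_obs n om = t] = (tuple_weight q t)%:E.
Proof.
have fin : P [set om | first_obs n om = t] \is a fin_num.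
  rewrite ge0_fin_numE //.
  by rewrite (le_lt_trans (probability_le1 _ (first_obs_meas t))) // ltry.
rewrite -(fineK fin); congr EFin.
rewrite first_obsE A_indep ?iota_uniq //.
rewrite (_ : iota 0 n = index_iota 0 n); last by rewrite /index_iota subn0.
rewrite big_mkord /tuple_weight.
by apply: eq_bigr => i _; rewrite A_law /= (tnth_nth s0).
Qed.

Lemma first_obs_event n (Q : pred (n.-tuple S)) :
  measurable [set om | Q (first_obs n om)] /\
  P [set om | Q (first_obs n om)] = (\sum_(t | Q t) tuple_weight q t)%:E.
Proof.
have [? ->] := fiber_sum Q (@first_obs_meas n).
by split => //; under eq_bigr do rewrite first_obs_law; rewrite sumEFin.
Qed.

(* Markov's inequality for the fourth power of a centered bounded sum. *)
Lemma fourth_moment_tail n (x : S -> R) (c : R) :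
  \sum_s q s * x s = 0 -> (forall s, `|x s| <= 1) -> 0 < c ->
  (P [set om | (c < tuple_sum x (first_obs n om) ^+ 4)%R] <=
   (3 * n%:R ^+ 2 / c)%:E)%E.
Proof.
move=> x_centered x_le1 c_gt0.
have [_ ->] := first_obs_event (fun t : n.-tuple S => c < tuple_sum x t ^+ 4).
rewrite lee_fin.
have [_ _ _ M4] := sum_moment_bounds law_ge0 law_sum1 x_centered x_le1 n.
apply: le_trans (_ : sum_moment q x n 4 / c <= _); last first.
  by rewrite ler_pM2r ?invr_gt0.
have w_ge0 (t : n.-tuple S) := tuple_weight_ge0 law_ge0 t.
rewrite /sum_moment mulr_suml [X in _ <= X](bigID (fun t => c < tuple_sum x t ^+ 4)).
rewrite /= -[X in X <= _]addr0; apply: lerD.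
  apply: ler_sum => t ct; rewrite -mulrA ler_peMr //.
  by rewrite ler_pdivlMr // mul1r ltW.
apply: sumr_ge0 => t _; rewrite divr_ge0 ?(ltW c_gt0) // mulr_ge0 //.
by rewrite (_ : 4 = 2 * 2)%N // exprM sqr_ge0.
Qed.

(* Fourth-moment strong law: a centered bounded sum is eventually at most
   n/(k+1) in absolute value, almost surely (Borel-Cantelli with the
   summable tail bounds 3 (k+1)^4 / n^2). *)
Lemma fourth_moment_slln (x : S -> R) (k : nat) :
  \sum_s q s * x s = 0 -> (forall s, `|x s| <= 1) ->
  {ae P, forall om, \forall n \near \oo,
      `|tuple_sum x (first_obs n om)| <= n%:R / k.+1%:R}.
Proof.
move=> x_centered x_le1.
pose c (j : nat) : R := (j.+1%:R / k.+1%:R) ^+ 4.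
have c_gt0 j : 0 < c j by rewrite exprn_gt0 // divr_gt0 // ltr0n.
pose F (j : nat) := [set om | c j < tuple_sum x (first_obs j.+1 om) ^+ 4].
have F_meas j : measurable (F j).
  exact: (first_obs_event (fun t : j.+1.-tuple S => c j < tuple_sum x t ^+ 4)).1.
have F_le j : (P (F j) <= (3 * k.+1%:R ^+ 4 * (j.+1%:R ^+ 2)^-1)%:E)%E.
  apply: le_trans (fourth_moment_tail j.+1 x_centered x_le1 (c_gt0 j)) _.
  rewrite lee_fin /c expr_div_n le_eqVlt; apply/orP; left; apply/eqP.
  rewrite (_ : 4 = 2 + 2)%N // !exprD; field.
  by apply/andP; split; apply: lt0r_neq0; have := ler0n R j; have := ler0n R k; lra.
have limsup0 : P (lim_sup_set F) = 0%E.
  apply: lim_sup_set_cvg0 => //.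
  apply: (le_lt_trans (y := (3 * k.+1%:R ^+ 4 * 2)%:E)); last exact: ltry.
  apply: nneseries_le_bound => [n|N]; first exact: measure_ge0.
  apply: le_trans (_ : (\sum_(n < N)
      (3 * k.+1%:R ^+ 4 * (n.+1%:R ^+ 2)^-1)%:E <= _)%E).
    by apply: lee_sum => n _; exact: F_le.
  rewrite sumEFin lee_fin -mulr_sumr ler_wpM2l //.
  apply: le_trans (sum_inv_sq R N) _.
  by rewrite lerBlDr lerDl mulr_ge0 // invr_ge0.
exists (lim_sup_set F); split => //.
  apply: bigcap_measurableType => n _.
  by apply: bigcup_measurable => j _; exact: F_meas.
move=> om /= not_ev; apply: contrapT => not_limsup; apply: not_ev.
suff [m Fm] : exists m, forall j, (m <= j)%N -> ~ F j om.
  exists m.+1 => // n /= mn.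
  have nE : n = n.-1.+1 by rewrite prednK // (leq_trans _ mn).
  have := Fm n.-1; rewrite -ltnS -nE => /(_ mn) /negP; rewrite -leNgt /c -nE.
  move=> h; rewrite -(@ler_pXn2r _ 4) // ?nnegrE ?divr_ge0 //.
  by rewrite (_ : 4 = 2 * 2)%N // exprM real_normK ?num_real // -exprM.
apply: contrapT => h; apply: not_limsup => m _; apply: contrapT => h2; apply: h.
by exists m => j mj Fj; apply: h2; exists j.
Qed.

End Cylinders.

Lemma count_slln : {ae P, forall om, forall a (k : nat), \forall n \near \oo,
  `|emp_count R (A^~ om) n a - n%:R * q a| <= n%:R / k.+1%:R}.
Proof.
apply: filter_forall => a; apply: ae_foralln => k.
pose x (s : S) : R := (s == a)%:R - q a.
have x_centered : \sum_s q s * x s = 0.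
  under eq_bigr do rewrite /x mulrBr.
  rewrite sumrB -mulr_suml law_sum1 mul1r (bigD1 a) //= eqxx mulr1.
  by rewrite big1 ?addr0 ?subrr // => s /negbTE ->; rewrite mulr0.
have q_le1 : q a <= 1.
  by rewrite -law_sum1 (bigD1 a) //= lerDl sumr_ge0 // => s _; exact: law_ge0.
have x_le1 s : `|x s| <= 1.
  rewrite /x; case: eqP => _; last by rewrite sub0r normrN ger0_norm ?law_ge0.
  by rewrite ger0_norm ?subr_ge0 // lerBlDr lerDl law_ge0.
apply: filterS (fourth_moment_slln a k x_centered x_le1) => om.
apply: filterS => n; congr (`|_| <= _).
rewrite /tuple_sum /emp_count /x sumrB sumr_const card_ord mulr_natl.
by congr (_ - _); apply: eq_bigr => i _; rewrite tnth_mktuple.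
Qed.

Lemma obs_in_support : {ae P, forall om, forall i, 0 < q (A i om)}.
Proof.
apply: ae_foralln => i.
have [off_meas off_prob] := fiber_sum (fun a => ~~ (0 < q a)) (A_meas i).
exists [set om | ~~ (0 < q (A i om))].
split; [exact: off_meas | | by move=> om /= h; apply/negP].
transitivity (\sum_(a | ~~ (0 < q a)%R) P [set om | A i om = a])%E.
  exact: off_prob.
rewrite big1 // => a off_a; rewrite A_law; congr EFin.
by apply/eqP; rewrite eq_le law_ge0 andbT leNgt.
Qed.

End IidFinite.

Section Simplex.
Variables (R : realType) (m : nat).
Local Notation W := (@wvec R m.+1).

Lemma indTE (a : {set 'I_m.+1}) (v : 'cV[R]_m.+1) :
  indT a v = \sum_(j < m.+1) (j \in a)%:R * v j 0.
Proof. by rewrite /indT mxE; apply: eq_bigr => j _; rewrite !mxE. Qed.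

Lemma indTB a (u v : 'cV[R]_m.+1) : indT a (u - v) = indT a u - indT a v.
Proof. by rewrite /indT mulmxBr mxE [X in _ + X]mxE. Qed.

Lemma wvecB (u v : 'cV[R]_m) : W u - W v = Bmx R m.+1 *m (u - v).
Proof. by rewrite /wvec mulmxBr opprD addrACA subrr add0r. Qed.

Lemma wvec_low (th : 'cV[R]_m) (i : 'I_m) :
  W th (widen_ord (leqnSn m) i) 0 = th i 0.
Proof.
rewrite /wvec !mxE /= (ltn_eqF (ltn_ord i)) add0r.
rewrite (bigD1 i) //= !mxE /= ltn_ord eqxx mul1r big1 ?addr0 // => j ji.
by rewrite !mxE /= ltn_ord (inj_eq val_inj) eq_sym (negbTE ji) mul0r.
Qed.

Lemma wvec_last (th : 'cV[R]_m) : W th ord_max 0 = 1 - \sum_(j < m) th j 0.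
Proof.
rewrite /wvec !mxE /= eqxx -sumrN; congr (_ + _).
by apply: eq_bigr => j _; rewrite !mxE /= ltnn mulN1r.
Qed.

Lemma wvec_sum (th : 'cV[R]_m) : \sum_(i < m.+1) W th i 0 = 1.
Proof.
rewrite big_ord_recr /= wvec_last.
by under eq_bigr do rewrite wvec_low; rewrite addrC subrK.
Qed.

Lemma wvec_ge0 (th : 'cV[R]_m) : @Theta R m.+1 th -> forall i, 0 <= W th i 0.
Proof.
move=> [th_ge0 th_sum] i; have [lt_im|] := ltnP i m.
  have -> : i = widen_ord (leqnSn m) (Ordinal lt_im) by apply: val_inj.
  by rewrite wvec_low.
move=> le_mi; have -> : i = ord_max.
  by apply: val_inj; apply/eqP; rewrite eqn_leq le_mi -ltnS ltn_ord.
by rewrite wvec_last subr_ge0.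
Qed.

Lemma indT_ge0 a (th : 'cV[R]_m) : @Theta R m.+1 th -> 0 <= indT a (W th).
Proof.
by move=> th_in; rewrite indTE; apply: sumr_ge0 => j _; rewrite mulr_ge0 ?wvec_ge0.
Qed.

Lemma indT_le1 a (th : 'cV[R]_m) : @Theta R m.+1 th -> indT a (W th) <= 1.
Proof.
move=> th_in; rewrite indTE -[X in _ <= X](wvec_sum th); apply: ler_sum => j _.
by rewrite ler_piMl ?wvec_ge0 //; case: (j \in a).
Qed.

Lemma design_sum (mu : {set 'I_m.+1} -> R) (v : 'cV[R]_m.+1) :
  conditional_design mu -> \sum_a mu a * indT a v = \sum_(j < m.+1) v j 0.
Proof.
move=> [_ [_ mu_cover]].
under eq_bigr do rewrite indTE mulr_sumr.
rewrite exchange_big /=; apply: eq_bigr => j _.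
rewrite -[RHS]mulr1 -[X in _ = _ * X](mu_cover j) mulr_sumr [RHS]big_mkcond /=.
by apply: eq_bigr => a _; case: (j \in a); rewrite ?mul1r ?mul0r ?mulr0 // mulrC.
Qed.

End Simplex.

Section VanishingVectors.
Variable R : realType.

Definition vanishing k (u : nat -> 'cV[R]_k) :=
  forall e, 0 < e -> \forall n \near \oo, forall i, `|u n i 0| <= e.

Lemma vanishing_mul k l (L : 'M[R]_(l, k)) (u : nat -> 'cV[R]_k) :
  vanishing u -> vanishing (fun n => L *m u n).
Proof.
move=> u_van e e_gt0.
pose K := \sum_(j < l) \sum_(i < k) `|L j i| + 1.
have K_gt0 : 0 < K by rewrite ltr_wpDl // sumr_ge0 // => j _; rewrite sumr_ge0.
have L_row j : \sum_i `|L j i| < K.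
  apply: le_lt_trans (_ : _ <= \sum_(j0 < l) \sum_(i < k) `|L j0 i|) _.
    by rewrite (bigD1 j) //= lerDl sumr_ge0 // => j0 _; rewrite sumr_ge0.
  by rewrite ltrDl.
apply: filterS (u_van (e / K) (divr_gt0 e_gt0 K_gt0)) => n u_le j.
rewrite mxE; apply: le_trans (ler_norm_sum _ _ _) _.
apply: le_trans (_ : \sum_i `|L j i| * (e / K) <= _).
  by apply: ler_sum => i _; rewrite normrM ler_wpM2l.
by rewrite -mulr_suml mulrA ler_pdivrMr // mulrC ler_wpM2l ?ltW.
Qed.

Lemma vanishing_cvg k (f : nat -> 'cV[R]_k) y :
  vanishing (fun n => f n - y) -> f n @[n --> \oo] --> y.
Proof.
move=> f_van; apply/cvgrPdist_le => e e_gt0.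
apply: filterS (f_van e e_gt0) => n f_le.
rewrite -normrN opprB (_ : `|f n - y| = mx_norm (f n - y)) // mx_normrE.
apply: bigmax_le => [|[i j] _]; first exact: ltW.
by rewrite (ord1 j) !mxE /=; move: (f_le i); rewrite !mxE.
Qed.

End VanishingVectors.

Section Identification.
Variables (R : realType) (m : nat) (mu : {set 'I_m.+1} -> R).
Local Notation N := #|{set 'I_m.+1}|.

Definition design_mx : 'M[R]_(N, m) := \matrix_(i, j)
  (if 0 < mu (enum_val i) then ((ind R (enum_val i))^T *m Bmx R m.+1) 0 j else 0).

Lemma design_mxE (u : 'cV[R]_m) i : (design_mx *m u) i 0 =
  if 0 < mu (enum_val i) then ((ind R (enum_val i))^T *m Bmx R m.+1 *m u) 0 0
  else 0.
Proof.
rewrite !mxE; case: ifP => mu_pos.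
  by apply: eq_bigr => j _; rewrite /design_mx mxE mu_pos.
by rewrite big1 // => j _; rewrite /design_mx mxE mu_pos mul0r.
Qed.

Lemma design_mx_left_inverse :
  assumption1 mu -> exists L : 'M[R]_(m, N), L *m design_mx = 1%:M.
Proof.
move=> ident.
have inj (u : 'cV[R]_m) : design_mx *m u = 0 -> u = 0.
  move=> Du0; apply: ident => a mu_pos.
  move/matrixP: Du0 => /(_ (enum_rank a) 0).
  by rewrite design_mxE enum_rankK mu_pos !mxE.
have : row_free design_mx^T.
  apply: inj_row_free => v vD0; apply: trmx_inj; rewrite trmx0; apply: inj.
  by rewrite -[design_mx]trmxK -trmx_mul vD0 trmx0.
case/row_freeP => L LD; exists L^T.
by rewrite -[design_mx]trmxK -trmx_mul LD trmx1.
Qed.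

End Identification.

Lemma eln_sum (R : realType) n (x : 'I_n -> R) : (forall i, 0 < x i) ->
  (\sum_(i < n) eln (x i) = (\sum_(i < n) ln (x i))%:E)%E.
Proof. by move=> x_gt0; rewrite -sumEFin; apply: eq_bigr => i _; rewrite /eln x_gt0. Qed.

Lemma eln_sum_pos (R : realType) n (x : 'I_n -> R) r :
  (r%:E <= \sum_(i < n) eln (x i))%E -> forall i, 0 < x i.
Proof.
move=> sum_ge i; apply: contraTT sum_ge => x_le0.
have -> : (\sum_(i < n) eln (x i) = -oo)%E.
  by apply/eqP; rewrite esum_eqNy; apply/existsP; exists i; rewrite /eln (negbTE x_le0).
by rewrite leNgt ltNye.
Qed.

(* ln t <= 2 (sqrt t - 1): the inequality turning the likelihood comparison
   into a statement about square-root ratios (Hellinger affinity). *)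
Lemma ln_le_sqrt (R : realType) (t : R) : 0 < t -> ln t <= 2 * (Num.sqrt t - 1).
Proof.
move=> t_gt0; have sqrt_gt0 : 0 < Num.sqrt t by rewrite sqrtr_gt0.
rewrite -{1}(sqr_sqrtr (ltW t_gt0)) lnXn // mulr2n.
have := @le_ln1Dx R (Num.sqrt t - 1); rewrite (addrC 1) subrK => ln_le.
have : -1 < Num.sqrt t - 1 by lra.
move/ln_le; lra.
Qed.

Lemma abs_le_sq (R : realType) (x e : R) : 0 <= e -> x ^+ 2 <= e ^+ 2 -> `|x| <= e.
Proof.
move=> e_ge0 sq_le; rewrite -(@ler_pXn2r _ 2) // ?nnegrE //.
by rewrite real_normK ?num_real.
Qed.

Lemma sum_by_count (R : realType) (S : finType) (As : nat -> S) n (g : S -> R) :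
  \sum_(i < n) g (As i) = \sum_a g a * emp_count R As n a.
Proof.
under [RHS]eq_bigr do rewrite /emp_count mulr_sumr.
rewrite exchange_big /=; apply: eq_bigr => i _.
rewrite (bigD1 (As i)) //= eqxx mulr1 big1 ?addr0 // => a /negbTE a_neq.
by rewrite eq_sym a_neq mulr0.
Qed.

Section Consistency.
Variables (R : realType) (m : nat) (mu : {set 'I_m.+1} -> R) (theta : 'cV[R]_m).
Hypotheses (mu_design : conditional_design mu) (theta_in : @Theta R m.+1 theta).
Local Notation W := (@wvec R m.+1).
Local Notation S := {set 'I_m.+1}.
Local Notation mass a := (indT a (W theta)).
Local Notation q := (law_A mu (W theta)).

Lemma mu_ge0 a : 0 <= mu a. Proof. by case: mu_design. Qed.

Lemma q_ge0 a : 0 <= q a. Proof. by rewrite mulr_ge0 ?mu_ge0 ?indT_ge0. Qed.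

Lemma q_pos a : 0 < q a -> 0 < mu a /\ 0 < mass a.
Proof.
move=> q_gt0; rewrite !lt0r mu_ge0 indT_ge0 // !andbT.
by split; apply/eqP => e0; move: q_gt0; rewrite /law_A e0 ?mul0r ?mulr0 ltxx.
Qed.

Lemma design_mass_sum (th : 'cV[R]_m) : \sum_a mu a * indT a (W th) = 1.
Proof. by rewrite design_sum // wvec_sum. Qed.

Lemma support_sum : \sum_(a | 0 < q a) q a = 1.
Proof.
rewrite -(design_mass_sum theta) [RHS](bigID (fun a => 0 < q a)) /= -[LHS]addr0.
congr (_ + _); apply/esym/big1 => a q_le0.
by apply/eqP; rewrite eq_le q_ge0 andbT leNgt.
Qed.

Lemma off_support_mass (th : 'cV[R]_m) :
  \sum_(b | ~~ (0 < q b)) mu b * indT b (W th) =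
  \sum_(b | 0 < q b) (q b - mu b * indT b (W th)).
Proof.
have := design_mass_sum th; rewrite (bigID (fun b => 0 < q b)) /= => total.
by rewrite sumrB support_sum -total addrAC subrr add0r.
Qed.

Lemma sum_by_count_support (As : nat -> S) n (g : S -> R) :
  (forall i, 0 < q (As i)) ->
  \sum_(i < n) g (As i) = \sum_(a | 0 < q a) g a * emp_count R As n a.
Proof.
move=> As_supp; rewrite (sum_by_count As n g) (bigID (fun a => 0 < q a)) /=.
rewrite [X in _ + X]big1 ?addr0 // => a q_a; rewrite /emp_count big1 ?mulr0 // => i _.
by case: eqP => // As_i; move: (As_supp i); rewrite As_i (negbTE q_a).
Qed.

Definition ratio (th : 'cV[R]_m) (a : S) := Num.sqrt (indT a (W th) / mass a).

Lemma ratio_ge0 th a : 0 <= ratio th a. Proof. exact: sqrtr_ge0. Qed.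

Lemma ratio_sq th a : @Theta R m.+1 th -> 0 < mass a ->
  ratio th a ^+ 2 = indT a (W th) / mass a.
Proof. by move=> th_in mass_gt0; rewrite sqr_sqrtr // divr_ge0 ?indT_ge0 // ltW. Qed.

Lemma ratio_le th a : @Theta R m.+1 th -> 0 < mass a ->
  ratio th a <= 1 + (mass a)^-1.
Proof.
move=> th_in mass_gt0.
have : ratio th a ^+ 2 <= (mass a)^-1.
  by rewrite ratio_sq // ler_pdivrMr // mulVf ?gt_eqF // indT_le1.
have := ratio_ge0 th a; set t := ratio th a; set u := (mass a)^-1 => ? ?; nra.
Qed.

(* A maximizer beats theta: with ln t <= 2 (sqrt t - 1) this gives
   n <= sum_i ratio th (A_i). *)
Lemma mle_ratio_ineq (As : nat -> S) n th :
  is_mle As n th -> (forall i, 0 < q (As i)) ->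
  n%:R <= \sum_(i < n) ratio th (As i).
Proof.
move=> [_ th_max] As_supp.
have mass_gt0 i : 0 < mass (As i) by case: (q_pos (As_supp i)).
have := th_max theta theta_in.
rewrite /loglik (eln_sum (fun i : 'I_n => mass_gt0 i)) => lik_le.
have fit_gt0 (i : 'I_n) : 0 < indT (As i) (W th) := eln_sum_pos lik_le i.
rewrite (eln_sum fit_gt0) lee_fin in lik_le.
have log_ratio (i : 'I_n) :
    ln (indT (As i) (W th)) - ln (mass (As i)) <= 2 * (ratio th (As i) - 1).
  by rewrite -ln_div ?posrE //; apply: ln_le_sqrt; rewrite divr_gt0.
have : 0 <= \sum_(i < n) 2 * (ratio th (As i) - 1).
  apply: le_trans (_ : 0 <= \sum_(i < n)
      (ln (indT (As i) (W th)) - ln (mass (As i)))) _.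
    by rewrite sumrB subr_ge0.
  by apply: ler_sum => i _; exact: log_ratio.
rewrite -mulr_sumr sumrB sumr_const card_ord => ?; lra.
Qed.

Definition hellinger (th : 'cV[R]_m) :=
  \sum_(a | 0 < q a) q a * (ratio th a - 1) ^+ 2.

Lemma hellinger_bound (As : nat -> S) n th :
  is_mle As n th -> (forall i, 0 < q (As i)) ->
  n%:R * hellinger th <=
  2 * \sum_(a | 0 < q a) `|emp_count R As n a - n%:R * q a| * (1 + (mass a)^-1).
Proof.
move=> th_mle As_supp; have th_in := th_mle.1.
have := mle_ratio_ineq th_mle As_supp; rewrite (sum_by_count_support _ _ As_supp).
set X2 := \sum_(a | 0 < q a) q a * ratio th a ^+ 2.
set X1 := \sum_(a | 0 < q a) q a * ratio th a.
set Y := \sum_(a | 0 < q a) ratio th a * emp_count R As n a => n_le_Y.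
have X2_le1 : X2 <= 1.
  rewrite -(design_mass_sum th) /X2 [X in _ <= X](bigID (fun a => 0 < q a)) /=.
  rewrite -[X in X <= _]addr0; apply: lerD.
    apply: ler_sum => a q_gt0; have [_ mass_gt0] := q_pos q_gt0.
    by rewrite ratio_sq // /law_A -mulrA (mulrC (mass a)) divfK ?gt_eqF.
  by apply: sumr_ge0 => a _; rewrite mulr_ge0 ?mu_ge0 ?indT_ge0.
have hellE : hellinger th = X2 + \sum_(a | 0 < q a) q a - 2 * X1.
  rewrite /hellinger /X2 /X1 mulr_sumr -big_split /= -sumrB.
  by apply: eq_bigr => a _; ring.
have devE : \sum_(a | 0 < q a) 2 * ((emp_count R As n a - n%:R * q a) * ratio th a) =
    2 * Y - 2 * n%:R * X1.
  rewrite -mulr_sumr /Y /X1 -mulrA [n%:R * _]mulr_sumr -mulrBr; congr (_ * _).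
  by rewrite -sumrB; apply: eq_bigr => a _; ring.
have dev_le :
    \sum_(a | 0 < q a) 2 * ((emp_count R As n a - n%:R * q a) * ratio th a) <=
    2 * \sum_(a | 0 < q a) `|emp_count R As n a - n%:R * q a| * (1 + (mass a)^-1).
  rewrite -mulr_sumr ler_wpM2l //; apply: ler_sum => a q_gt0.
  have [_ mass_gt0] := q_pos q_gt0.
  apply: le_trans (ler_norm _) _; rewrite normrM (ger0_norm (ratio_ge0 th a)).
  by rewrite ler_wpM2l // ratio_le.
rewrite devE in dev_le; rewrite hellE support_sum.
have : n%:R * X2 <= n%:R by rewrite ler_piMr.
have := ler0n R n; nra.
Qed.

Section MleSequence.
Variables (As : nat -> S) (th : nat -> 'cV[R]_m).
Hypotheses (th_mle : forall n, is_mle As n (th n))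
  (As_supp : forall i, 0 < q (As i))
  (As_freq : forall a (k : nat), \forall n \near \oo,
     `|emp_count R As n a - n%:R * q a| <= n%:R / k.+1%:R).

Lemma hellinger_vanishes e : 0 < e -> \forall n \near \oo, hellinger (th n) <= e.
Proof.
move=> e_gt0.
pose K := \sum_(a | 0 < q a) (1 + (mass a)^-1).
have K_ge0 : 0 <= K.
  by apply: sumr_ge0 => a _; rewrite addr_ge0 // invr_ge0 indT_ge0.
pose k := Num.truncn (2 * K / e).
have k_gt : 2 * K / e < k.+1%:R := truncnS_gt _.
have k_pos : (0:R) < k.+1%:R by rewrite ltr0n.
have freq_all : \forall n \near \oo, forall a,
    `|emp_count R As n a - n%:R * q a| <= n%:R / k.+1%:R.
  by apply: filter_forall => a; exact: As_freq.
have n_pos : \forall n \near \oo, (0 < n)%N by exists 1%N.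
apply: filterS2 freq_all n_pos => n freq_n n_gt0.
have dev_le : 2 * \sum_(a | 0 < q a)
      `|emp_count R As n a - n%:R * q a| * (1 + (mass a)^-1) <= n%:R * (2 * K / k.+1%:R).
  apply: le_trans (_ : 2 * \sum_(a | 0 < q a) (n%:R / k.+1%:R) *
      (1 + (mass a)^-1) <= _).
    rewrite ler_wpM2l //; apply: ler_sum => a _; apply: ler_wpM2r => //.
    by rewrite addr_ge0 // invr_ge0 indT_ge0.
  by rewrite -mulr_sumr /K le_eqVlt; apply/orP; left; apply/eqP; ring.
have hell_le : hellinger (th n) <= 2 * K / k.+1%:R.
  rewrite -(@ler_pM2l _ n%:R) ?ltr0n //.
  exact: le_trans (hellinger_bound (th_mle n) As_supp) dev_le.
apply: le_trans hell_le _.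
rewrite ler_pdivrMr // mulrC -ler_pdivrMr // ler_pdivrMr //.
by move: k_gt; rewrite ltr_pdivrMr // => ?; nra.
Qed.

(* On the support of q, small Hellinger distance forces the fitted mass to be
   close to the true one: |s - s0| = s0 |t - 1| (t + 1) with t = ratio. *)
Lemma fit_on_support b : 0 < q b -> forall e, 0 < e ->
  \forall n \near \oo, `|indT b (W (th n)) - mass b| <= e.
Proof.
move=> q_gt0 e e_gt0; have [mu_gt0 mass_gt0] := q_pos q_gt0.
pose K := mass b ^+ 2 * (2 + (mass b)^-1) ^+ 2 / q b.
have K_gt0 : 0 < K.
  by rewrite divr_gt0 // mulr_gt0 ?exprn_gt0 // ltr_wpDr // invr_ge0 ltW.
apply: filterS (hellinger_vanishes (divr_gt0 (exprn_gt0 2 e_gt0) K_gt0)).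
move=> n hell_le; have th_in := (th_mle n).1.
set t := ratio (th n) b.
have t_le : t <= 1 + (mass b)^-1 := ratio_le th_in mass_gt0.
have fitE : indT b (W (th n)) = mass b * t ^+ 2.
  by rewrite /t ratio_sq // mulrC divfK ?gt_eqF.
have term_le : q b * (t - 1) ^+ 2 <= hellinger (th n).
  rewrite /hellinger (bigD1 b) //= lerDl; apply: sumr_ge0 => c _.
  by rewrite mulr_ge0 ?q_ge0 ?sqr_ge0.
have t1_le : (t + 1) ^+ 2 <= (2 + (mass b)^-1) ^+ 2.
  have : 0 <= (mass b)^-1 by rewrite invr_ge0 ltW.
  have := ratio_ge0 (th n) b; move: t_le; rewrite -/t.
  by set u := (mass b)^-1 => ? ? ?; nra.
apply: abs_le_sq; first exact: ltW.
rewrite fitE (_ : (mass b * t ^+ 2 - mass b) ^+ 2 =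
    mass b ^+ 2 * (t - 1) ^+ 2 * (t + 1) ^+ 2); last by ring.
apply: le_trans (_ : mass b ^+ 2 * (t - 1) ^+ 2 * (2 + (mass b)^-1) ^+ 2 <= _).
  by rewrite ler_wpM2l // mulr_ge0 ?sqr_ge0.
apply: le_trans (_ : K * (q b * (t - 1) ^+ 2) <= _); last first.
  by apply: le_trans (_ : K * hellinger (th n) <= _);
    [rewrite ler_wpM2l // ltW | rewrite mulrC -ler_pdivlMr].
rewrite /K le_eqVlt; apply/orP; left; apply/eqP.
by field; rewrite !gt_eqF.
Qed.

(* Off the support of q (but with mu_a > 0), the fitted mass tends to 0,
   because it is paid for by the masses on the support (off_support_mass). *)
Lemma fit_on_design a : 0 < mu a -> forall e, 0 < e ->
  \forall n \near \oo, `|indT a (W (th n)) - mass a| <= e.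
Proof.
move=> mu_gt0 e e_gt0.
have [q_gt0|q_le0] := boolP (0 < q a); first exact: fit_on_support.
have mass0 : mass a = 0.
  by apply/eqP; rewrite eq_le indT_ge0 // andbT; move: q_le0; rewrite -leNgt pmulr_rle0.
pose M := \sum_(b | 0 < q b) mu b.
have M_ge0 : 0 <= M by apply: sumr_ge0 => b _; exact: mu_ge0.
pose e' := e * mu a / (M + 1).
have e'_gt0 : 0 < e' by rewrite divr_gt0 ?mulr_gt0 // ltr_wpDl.
have fit_all : \forall n \near \oo, forall b,
    0 < q b -> `|indT b (W (th n)) - mass b| <= e'.
  apply: filter_forall => b; have [q_b|q_b] := boolP (0 < q b).
    by apply: filterS (fit_on_support q_b e'_gt0) => n.
  by apply: nearW.
apply: filterS fit_all => n fit_n; have th_in := (th_mle n).1.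
rewrite mass0 subr0 ger0_norm ?indT_ge0 //.
have paid : mu a * indT a (W (th n)) <= M * e'.
  apply: le_trans (_ : \sum_(b | ~~ (0 < q b)) mu b * indT b (W (th n)) <= _).
    rewrite (bigD1 a) //= lerDl; apply: sumr_ge0 => c _.
    by rewrite mulr_ge0 ?mu_ge0 ?indT_ge0.
  rewrite off_support_mass /M mulr_suml; apply: ler_sum => b q_b.
  rewrite /law_A -mulrBr ler_wpM2l ?mu_ge0 //.
  by apply: le_trans (fit_n b q_b); rewrite -normrN opprB ler_norm.
have Me'_le : M * e' <= e * mu a.
  have : 0 <= e * mu a by rewrite mulr_ge0 ?ltW.
  rewrite /e' mulrA ler_pdivrMr ?ltr_wpDl //; nra.
by rewrite -(@ler_pM2l _ (mu a)) // (mulrC _ e); exact: le_trans paid Me'_le.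
Qed.

(* Identification: the fitted masses of the subsets with mu_a > 0 determine
   the parameter, so the maximizers converge. *)
Lemma mle_consistent : assumption1 mu ->
  (th n @[n --> \oo] --> theta) /\ (W (th n) @[n --> \oo] --> W theta).
Proof.
move=> ident; have [L L_inv] := design_mx_left_inverse ident.
have design_van : vanishing (fun n => design_mx mu *m (th n - theta)).
  move=> e e_gt0; apply: filter_forall => i.
  have [mu_gt0|mu_le0] := boolP (0 < mu (enum_val i)); last first.
    by apply: nearW => n; rewrite design_mxE (negbTE mu_le0) normr0 ltW.
  apply: filterS (fit_on_design mu_gt0 e_gt0) => n fit_le.
  by rewrite design_mxE mu_gt0 -mulmxA -wvecB -/(indT _ _) indTB.
have theta_van : vanishing (fun n => th n - theta).
  have := vanishing_mul L design_van.
  by under eq_fun do rewrite mulmxA L_inv mul1mx.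
split; apply: vanishing_cvg => //.
by under eq_fun do rewrite wvecB; exact: vanishing_mul.
Qed.

End MleSequence.
End Consistency.

Unset Implicit Arguments.
Theorem mainTheorem4 (R : realType) (d : measure_display) (T : measurableType d)
  (P : probability T R) (p : nat) (mu : {set 'I_p} -> R)
  (theta : 'cV[R]_p.-1) (A : nat -> T -> {set 'I_p})
  (theta_hat : nat -> T -> 'cV[R]_p.-1) :
  (4 <= p)%N ->
  conditional_design mu ->
  assumption1 mu ->
  Theta theta ->
  iid_subsets P A (law_A mu (wvec theta)) ->
  (forall n om, is_mle (fun i => A i om) n (theta_hat n om)) ->
  {ae P, forall om,
     (theta_hat n om @[n --> \oo] --> theta) /\
     (wvec (theta_hat n om) @[n --> \oo] --> wvec theta)}.
Proof.
case: p mu theta A theta_hat => [//|m] mu theta A theta_hat _ mu_design ident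
  theta_in [A_meas [A_law A_indep]] theta_hat_mle.
have freq := count_slln A_meas A_law A_indep.
have supp := obs_in_support A_meas A_law.
apply: filterS2 freq supp => om om_freq om_supp.
exact: (mle_consistent mu_design theta_in (theta_hat_mle ^~ om) om_supp om_freq ident).
Qed.
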